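(* Let $\mu_0\in\mathcal{P}(\mathbb{Z})$, $\varepsilon>0$ and $R\in\mathbb{N}$ with $R>R_{\mu_0}(\varepsilon)$. Then for all $n\in\mathbb{N}$ and all $w\in\Omega^{(0)}_n(\mu_0,2^{-R}\varepsilon)$, $|w_n|\le R+2\varepsilon n$.
   Context: $\overline{\mathbb{Z}}=\mathbb{Z}\cup\{\pm\infty\}$ with metric $d(h,k)=|\varphi(h)-\varphi(k)|$, $\varphi(\pm\infty)=\pm1$, $\varphi(k)=1-2^{-k}$ ($k\ge0$), $\varphi(k)=-1+2^{-|k|}$ ($k<0$). $\mathcal{P}(\mathbb{Z})$ is viewed inside $\mathcal{P}(\overline{\mathbb{Z}})$. For signed measures, $\|\nu\|=\sup\{\int f\,d\nu: f\text{ 1-Lipschitz for }d,\ \sup|f|\le1\}$; $B(\mu,\varepsilon)=\{\nu\in\mathcal{P}(\overline{\mathbb{Z}}):\|\nu-\mu\|<\varepsilon\}$. $\Omega^{(0)}_n$ is the set of $w=(w_1,\dots,w_n)\in\mathbb{Z}^n$ with $w_1=0$ and $|w_i-w_{i+1}|=1$; $\ell(w)=\frac1n\sum_{j}\delta_{w_j}$; $\Omega^{(0)}_n(\mu,\varepsilon)=\{w\in\Omega^{(0)}_n:\ell(w)\in B(\mu,\varepsilon)\}$. $R_{\mu_0}(\varepsilon)=\min\{R\in\mathbb{N}:\mu_0(\{-R+1,\dots,R-1\})>1-\varepsilon\}$. *)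

From Stdlib Require Import Reals ZArith List ClassicalEpsilon.
From Coquelicot Require Import Coquelicot.
Open Scope R_scope.

Inductive zbar : Type := ZFin (k : Z) | ZPinf | ZNinf.

Definition phiZ (k : Z) : R :=
  if (0 <=? k)%Z then 1 - (/2) ^ (Z.to_nat k) else -1 + (/2) ^ (Z.to_nat (- k)).

Definition phi (x : zbar) : R :=
  match x with ZFin k => phiZ k | ZPinf => 1 | ZNinf => -1 end.

Definition dZbar (h k : zbar) : R := Rabs (phi h - phi k).

Definition BL1 (f : zbar -> R) : Prop :=
  (forall x, Rabs (f x) <= 1) /\ (forall h k, Rabs (f h - f k) <= dZbar h k).

Definition symsum (a : Z -> R) (N : nat) : R :=
  sum_f_R0 (fun i => a (Z.of_nat i - Z.of_nat N)%Z) (2 * N).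

(* (signed) measures on the countable discrete space Zbar are represented by
   their weight functions nu : zbar -> R. *)
Definition finpart (nu : zbar -> R) : Z -> R := fun k => nu (ZFin k).

Definition integral (f : zbar -> R) (nu : zbar -> R) : R :=
  f ZPinf * nu ZPinf + f ZNinf * nu ZNinf
  + real (Lim_seq (symsum (fun k => f (ZFin k) * nu (ZFin k)))).

Definition probZbar (nu : zbar -> R) : Prop :=
  (forall x, 0 <= nu x) /\
  exists s, is_lim_seq (symsum (finpart nu)) s /\ nu ZPinf + nu ZNinf + s = 1.

Definition probZ (mu : Z -> R) : Prop :=
  (forall k, 0 <= mu k) /\ is_lim_seq (symsum mu) 1.

Definition embedZ (mu : Z -> R) : zbar -> R :=
  fun x => match x with ZFin k => mu k | _ => 0 end.

(* ||nu|| < delta, where ||nu|| = sup { ∫ f dnu : f ∈ BL1 } *)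
Definition norm_lt (nu : zbar -> R) (delta : R) : Prop :=
  exists c, c < delta /\ forall f, BL1 f -> integral f nu <= c.

Definition inBall (nu mu : zbar -> R) (eps : R) : Prop :=
  probZbar nu /\ norm_lt (fun x => nu x - mu x) eps.

(* walks w = (w_1,...,w_n) represented as lists; w_1 = nth 0 w *)
Definition Omega0 (n : nat) (w : list Z) : Prop :=
  length w = n /\ (0 < n)%nat /\ nth 0 w 0%Z = 0%Z /\
  (forall i, (S i < n)%nat -> Z.abs (nth i w 0%Z - nth (S i) w 0%Z) = 1%Z).

Definition ell (w : list Z) : zbar -> R :=
  fun x => match x with
           | ZFin k => INR (count_occ Z.eq_dec w k) / INR (length w)
           | _ => 0 end.

Definition Omega0_ball (n : nat) (mu : Z -> R) (eps : R) (w : list Z) : Prop :=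
  Omega0 n w /\ inBall (ell w) (embedZ mu) eps.

(* mu({-R+1,...,R-1}) *)
Definition massI (mu : Z -> R) (R0 : nat) : R :=
  match R0 with O => 0 | S r => symsum mu r end.

Definition Rgood (mu : Z -> R) (eps : R) (R0 : nat) : Prop := massI mu R0 > 1 - eps.

Definition R_mu (mu : Z -> R) (eps : R) : nat :=
  epsilon (inhabits 0%nat)
    (fun R0 => Rgood mu eps R0 /\ forall R', Rgood mu eps R' -> (R0 <= R')%nat).

(* The walk runs from 0 to w_n one unit at a time, so it visits every site
   between 0 and w_n; hence the empirical measure l(w) gives mass at least
   (|w_n| + 1 - R)/n to the tail {|k| >= R}.  Testing the ball condition
   against the 1-Lipschitz function 2^-R * 1_{|k| >= R} (Lipschitz because
   phi separates {|k| < R} from {|k| >= R} by at least 2^-R) bounds that mass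
   by eps + mu0({|k| >= R}) < 2 eps when R > R_mu0(eps). *)

From Stdlib Require Import Reals ZArith List Lia Lra Wf_nat ClassicalEpsilon Classical.
From Coquelicot Require Import Coquelicot.
Open Scope R_scope.

Lemma symsum_0 (a : Z -> R) : symsum a 0 = a 0%Z.
Proof. reflexivity. Qed.

Lemma symsum_S (a : Z -> R) (N : nat) :
  symsum a (S N) = symsum a N + a (- Z.of_nat (S N))%Z + a (Z.of_nat (S N)).
Proof.
  unfold symsum.
  replace (2 * S N)%nat with (S (S (2 * N))) by lia.
  rewrite decomp_sum by lia; cbn [Init.Nat.pred]; rewrite tech5.
  rewrite (sum_eq _ (fun i => a (Z.of_nat i - Z.of_nat N)%Z)).
  2:{ intros i _; f_equal; lia. }
  replace (Z.of_nat 0 - Z.of_nat (S N))%Z with (- Z.of_nat (S N))%Z by lia.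
  replace (Z.of_nat (S (S (2 * N))) - Z.of_nat (S N))%Z with (Z.of_nat (S N)) by lia.
  lra.
Qed.

Lemma symsum_ext (a b : Z -> R) (N : nat) :
  (forall k, a k = b k) -> symsum a N = symsum b N.
Proof. intros Hab; apply sum_eq; intros i _; apply Hab. Qed.

Lemma symsum_minus (a b : Z -> R) (N : nat) :
  symsum (fun k => a k - b k) N = symsum a N - symsum b N.
Proof. apply minus_sum. Qed.

Lemma symsum_scal (c : R) (a : Z -> R) (N : nat) :
  symsum (fun k => c * a k) N = c * symsum a N.
Proof.
  unfold symsum; rewrite scal_sum; apply sum_eq; intros i _; ring.
Qed.

Lemma symsum_ge0 (a : Z -> R) (N : nat) : (forall k, 0 <= a k) -> 0 <= symsum a N.
Proof. intros Ha; apply cond_pos_sum; intros i; apply Ha. Qed.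

Lemma symsum_le (a : Z -> R) (N K : nat) :
  (forall k, 0 <= a k) -> (N <= K)%nat -> symsum a N <= symsum a K.
Proof.
  intros Ha HNK; induction HNK as [|K _ IH]; [lra|].
  rewrite symsum_S.
  pose proof (Ha (- Z.of_nat (S K))%Z); pose proof (Ha (Z.of_nat (S K))); lra.
Qed.

Lemma symsum_stationary (a : Z -> R) (n N : nat) :
  (forall k, (Z.of_nat n <= Z.abs k)%Z -> a k = 0) -> (n <= N)%nat ->
  symsum a N = symsum a n.
Proof.
  intros Ha HnN; induction HnN as [|N HnN IH]; [reflexivity|].
  rewrite symsum_S, IH, !Ha by lia; ring.
Qed.

Lemma massI_le (mu : Z -> R) (R1 R2 : nat) :
  (forall k, 0 <= mu k) -> (R1 <= R2)%nat -> massI mu R1 <= massI mu R2.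
Proof.
  intros Hmu H12; destruct R1 as [|r1], R2 as [|r2]; simpl; try lia || lra.
  - apply symsum_ge0, Hmu.
  - apply symsum_le; [exact Hmu | lia].
Qed.

Lemma Rgood_exists (mu : Z -> R) (eps : R) :
  probZ mu -> 0 < eps -> exists R0, Rgood mu eps R0.
Proof.
  intros [_ Hlim] Heps; apply is_lim_seq_Reals in Hlim.
  destruct (Hlim eps Heps) as [N HN]; specialize (HN N (le_n N)).
  exists (S N); unfold Rgood, massI, R_dist in *; revert HN; split_Rabs; lra.
Qed.

Lemma R_mu_good (mu : Z -> R) (eps : R) :
  probZ mu -> 0 < eps -> Rgood mu eps (R_mu mu eps).
Proof.
  intros Hmu Heps.
  destruct (dec_inh_nat_subset_has_unique_least_element (Rgood mu eps)
              (fun R0 => classic _) (Rgood_exists mu eps Hmu Heps)) as [R0 [HR0 _]].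
  exact (proj1 (epsilon_spec (inhabits 0%nat)
                 (fun R1 => Rgood mu eps R1 /\ forall R', Rgood mu eps R' -> (R1 <= R')%nat)
                 (ex_intro _ R0 HR0))).
Qed.

Lemma massI_gt (mu : Z -> R) (eps : R) (R0 : nat) :
  probZ mu -> 0 < eps -> (R_mu mu eps <= R0)%nat -> 1 - eps < massI mu R0.
Proof.
  intros Hmu Heps HR0.
  pose proof (R_mu_good mu eps Hmu Heps) as Hgood; unfold Rgood in Hgood.
  pose proof (massI_le mu _ _ (proj1 Hmu) HR0); lra.
Qed.

Definition tail_ind (R0 : nat) (x : zbar) : R :=
  match x with
  | ZFin k => if (Z.of_nat R0 <=? Z.abs k)%Z then 1 else 0
  | _ => 1
  end.

Definition tail_test (R0 : nat) (x : zbar) : R := (/2) ^ R0 * tail_ind R0 x.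

Lemma pow_half_pos (k : nat) : 0 < (/2) ^ k.
Proof. apply pow_lt; lra. Qed.

Lemma pow_half_le (a b : nat) : (a <= b)%nat -> (/2) ^ b <= (/2) ^ a.
Proof.
  intros Hab; rewrite !pow_inv.
  apply Rinv_le_contravar; [apply pow_lt; lra | apply Rle_pow; [lra | exact Hab]].
Qed.

Lemma phiZ_abs (k : Z) : Rabs (phiZ k) = 1 - (/2) ^ Z.to_nat (Z.abs k).
Proof.
  pose proof (pow_half_pos (Z.to_nat (Z.abs k))) as Hp.
  pose proof (pow_half_le 0 (Z.to_nat (Z.abs k)) (Nat.le_0_l _)) as Hle; simpl in Hle.
  unfold phiZ; destruct (Z.leb_spec 0 k).
  - rewrite Z.abs_eq in * by lia; rewrite Rabs_pos_eq; lra.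
  - rewrite Z.abs_neq in * by lia; rewrite Rabs_left1; lra.
Qed.

Lemma tail_ind_cases (R0 : nat) (x : zbar) :
  (tail_ind R0 x = 0 /\ Rabs (phi x) <= 1 - 2 * (/2) ^ R0) \/
  (tail_ind R0 x = 1 /\ 1 - (/2) ^ R0 <= Rabs (phi x)).
Proof.
  pose proof (pow_half_pos R0).
  destruct x as [k| |]; simpl; [| rewrite Rabs_R1; lra | rewrite Rabs_m1; lra].
  rewrite phiZ_abs; destruct (Z.leb_spec (Z.of_nat R0) (Z.abs k)).
  - right; split; [reflexivity|].
    pose proof (pow_half_le R0 (Z.to_nat (Z.abs k)) ltac:(lia)); lra.
  - left; split; [reflexivity|].
    destruct R0 as [|r]; [lia|].
    pose proof (pow_half_le (Z.to_nat (Z.abs k)) r ltac:(lia)); simpl; lra.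
Qed.

Lemma BL1_tail_test (R0 : nat) : BL1 (tail_test R0).
Proof.
  pose proof (pow_half_pos R0) as Hc.
  pose proof (pow_half_le 0 R0 (Nat.le_0_l _)) as Hc1; simpl in Hc1.
  unfold tail_test; split.
  - intros x; destruct (tail_ind_cases R0 x) as [[-> _] | [-> _]];
      rewrite ?Rmult_0_r, ?Rmult_1_r, ?Rabs_R0, ?Rabs_pos_eq; lra.
  - intros h k; unfold dZbar.
    pose proof (Rabs_triang_inv (phi h) (phi k)).
    pose proof (Rabs_triang_inv (phi k) (phi h)).
    rewrite (Rabs_minus_sym (phi k)) in *.
    destruct (tail_ind_cases R0 h) as [[-> ?] | [-> ?]],
             (tail_ind_cases R0 k) as [[-> ?] | [-> ?]];
      [ replace ((/2) ^ R0 * 0 - (/2) ^ R0 * 0) with 0 by ring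
      | replace ((/2) ^ R0 * 0 - (/2) ^ R0 * 1) with (- (/2) ^ R0) by ring
      | replace ((/2) ^ R0 * 1 - (/2) ^ R0 * 0) with ((/2) ^ R0) by ring
      | replace ((/2) ^ R0 * 1 - (/2) ^ R0 * 1) with 0 by ring ];
      rewrite ?Rabs_R0, ?Rabs_Ropp, ?(Rabs_pos_eq ((/2) ^ R0)) by lra;
      solve [apply Rabs_pos | lra].
Qed.

Lemma tail_ind_near (R0 : nat) (k : Z) :
  (Z.abs k < Z.of_nat R0)%Z -> tail_ind R0 (ZFin k) = 0.
Proof. intros Hk; simpl; destruct (Z.leb_spec (Z.of_nat R0) (Z.abs k)); lia || reflexivity. Qed.

Lemma tail_ind_far (R0 : nat) (k : Z) :
  (Z.of_nat R0 <= Z.abs k)%Z -> tail_ind R0 (ZFin k) = 1.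
Proof. intros Hk; simpl; destruct (Z.leb_spec (Z.of_nat R0) (Z.abs k)); lia || reflexivity. Qed.

Lemma symsum_tail_below (R0 : nat) (a : Z -> R) (N : nat) :
  (N < R0)%nat -> symsum (fun k => tail_ind R0 (ZFin k) * a k) N = 0.
Proof.
  induction N as [|N IH]; intros HN.
  - rewrite symsum_0, tail_ind_near by (simpl; lia); ring.
  - rewrite symsum_S, IH, !tail_ind_near by lia; ring.
Qed.

Lemma symsum_tail (R0 : nat) (a : Z -> R) (N : nat) :
  (R0 <= S N)%nat ->
  symsum (fun k => tail_ind R0 (ZFin k) * a k) N = symsum a N - massI a R0.
Proof.
  induction N as [|N IH]; intros HN.
  - destruct R0 as [|[|]]; [| | lia]; cbn [massI]; rewrite !symsum_0.
    + rewrite tail_ind_far by (simpl; lia); ring.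
    + rewrite tail_ind_near by (simpl; lia); ring.
  - destruct (Nat.eq_dec R0 (S (S N))) as [->|HR].
    + rewrite symsum_tail_below by lia; cbn [massI]; ring.
    + rewrite !symsum_S, IH, !tail_ind_far by lia; ring.
Qed.

Lemma symsum_tail_ge (R0 M N : nat) (a : Z -> R) (delta : R) :
  0 <= delta -> (forall k, 0 <= a k) ->
  (forall j, (j <= M)%nat -> delta <= a (Z.of_nat j) \/ delta <= a (- Z.of_nat j)%Z) ->
  (M <= N)%nat ->
  delta * INR (S M - R0) <= symsum (fun k => tail_ind R0 (ZFin k) * a k) N.
Proof.
  intros Hdelta Ha Hcover HMN.
  assert (Htail_ge0 : forall k, 0 <= tail_ind R0 (ZFin k) * a k).
  { intros k; pose proof (Ha k); simpl; destruct (_ <=? _)%Z; lra. }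
  assert (Hpartial : forall K, (K <= M)%nat ->
            delta * INR (S K - R0) <= symsum (fun k => tail_ind R0 (ZFin k) * a k) K).
  { induction K as [|K IH]; intros HK; [rewrite symsum_0 | rewrite symsum_S].
    - destruct R0 as [|r].
      + rewrite tail_ind_far by (simpl; lia).
        destruct (Hcover 0%nat HK); simpl in *; lra.
      + replace (1 - S r)%nat with 0%nat by lia; rewrite Rmult_0_r; apply Htail_ge0.
    - specialize (IH ltac:(lia)).
      destruct (le_lt_dec R0 (S K)) as [HR|HR].
      + replace (S (S K) - R0)%nat with (S (S K - R0)) by lia.
        rewrite S_INR, !tail_ind_far by lia.
        destruct (Hcover (S K) HK); pose proof (Ha (- Z.of_nat (S K))%Z);
          pose proof (Ha (Z.of_nat (S K))); lra.
      + replace (S (S K) - R0)%nat with 0%nat by lia.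
        pose proof (symsum_ge0 _ K Htail_ge0).
        pose proof (Htail_ge0 (- Z.of_nat (S K))%Z); pose proof (Htail_ge0 (Z.of_nat (S K))).
        simpl INR; lra. }
  eapply Rle_trans; [apply Hpartial, le_n | apply symsum_le; assumption].
Qed.

Lemma integral_of_lim (f nu : zbar -> R) (l : R) :
  nu ZPinf = 0 -> nu ZNinf = 0 ->
  is_lim_seq (symsum (fun k => f (ZFin k) * nu (ZFin k))) l -> integral f nu = l.
Proof.
  intros Hp Hn Hl; unfold integral; rewrite Hp, Hn, (is_lim_seq_unique _ _ Hl); simpl; ring.
Qed.

Lemma integral_tail_test (nu : zbar -> R) (mu : Z -> R) (R0 n : nat) :
  nu ZPinf = 0 -> nu ZNinf = 0 ->
  (forall k, (Z.of_nat n <= Z.abs k)%Z -> nu (ZFin k) = 0) ->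
  is_lim_seq (symsum mu) 1 ->
  integral (tail_test R0) (fun x => nu x - embedZ mu x)
  = (/2) ^ R0 * (symsum (fun k => tail_ind R0 (ZFin k) * nu (ZFin k)) n - (1 - massI mu R0)).
Proof.
  intros Hp Hn Hfar Hmu; apply integral_of_lim; [rewrite Hp; simpl; ring | rewrite Hn; simpl; ring |].
  set (S_nu := symsum (fun k => tail_ind R0 (ZFin k) * nu (ZFin k)) n).
  apply (is_lim_seq_ext_loc (fun N => (/2) ^ R0 * (S_nu - (symsum mu N - massI mu R0)))).
  - exists (Nat.max n R0); intros N HN.
    rewrite (symsum_ext (fun k => tail_test R0 (ZFin k) * (nu (ZFin k) - embedZ mu (ZFin k)))
                        (fun k => (/2) ^ R0 * (tail_ind R0 (ZFin k) * nu (ZFin k)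
                                    - tail_ind R0 (ZFin k) * mu k)))
      by (intros k; unfold tail_test; simpl embedZ; ring).
    rewrite symsum_scal, symsum_minus, (symsum_tail R0 mu N) by lia.
    unfold S_nu; rewrite (symsum_stationary (fun k => tail_ind R0 (ZFin k) * nu (ZFin k)) n N);
      [reflexivity | | lia].
    intros k Hk; rewrite Hfar by exact Hk; ring.
  - apply (is_lim_seq_scal_l _ ((/2) ^ R0) (S_nu - (1 - massI mu R0))).
    apply is_lim_seq_minus'; [apply is_lim_seq_const |].
    apply is_lim_seq_minus'; [exact Hmu | apply is_lim_seq_const].
Qed.

Section Walk.

Variables (n : nat) (w : list Z).
Hypothesis Hw : Omega0 n w.

Lemma walk_abs_le (i : nat) : (i < n)%nat -> (Z.abs (nth i w 0%Z) <= Z.of_nat i)%Z.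
Proof.
  destruct Hw as (_ & _ & Hw0 & Hstep).
  induction i as [|i IH]; intros Hi; [rewrite Hw0; simpl; lia|].
  specialize (IH ltac:(lia)); specialize (Hstep i Hi); lia.
Qed.

Lemma walk_visits (i : nat) (m : Z) : (i < n)%nat ->
  ((0 <= m <= nth i w 0%Z) \/ (nth i w 0%Z <= m <= 0))%Z -> In m w.
Proof.
  destruct Hw as (Hlen & _ & Hw0 & Hstep).
  induction i as [|i IH]; intros Hi Hm.
  - rewrite Hw0 in Hm; replace m with (nth 0 w 0%Z) by lia; apply nth_In; lia.
  - destruct (Z.eq_dec m (nth (S i) w 0%Z)) as [->|Hne]; [apply nth_In; lia|].
    specialize (Hstep i Hi); apply IH; lia.
Qed.

Lemma ell_ge0 (x : zbar) : 0 <= ell w x.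
Proof.
  destruct x; simpl; try lra.
  apply Rdiv_le_0_compat; [apply pos_INR | apply lt_0_INR; destruct Hw as (-> & ? & _); lia].
Qed.

Lemma ell_visited (k : Z) : In k w -> / INR n <= ell w (ZFin k).
Proof.
  destruct Hw as (Hlen & Hn & _); intros Hk; simpl; rewrite Hlen.
  apply (count_occ_In Z.eq_dec), (le_INR 1) in Hk.
  apply (Rmult_le_compat_r (/ INR n)) in Hk; [|left; apply Rinv_0_lt_compat, lt_0_INR, Hn].
  simpl INR in Hk; unfold Rdiv; lra.
Qed.

Lemma ell_far (k : Z) : (Z.of_nat n <= Z.abs k)%Z -> ell w (ZFin k) = 0.
Proof.
  intros Hk.
  assert (Hnot : ~ In k w).
  { intros Hin; destruct (In_nth w k 0%Z Hin) as [j [Hj Hjk]].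
    destruct Hw as (Hlen & _); pose proof (walk_abs_le j ltac:(lia)); lia. }
  simpl; rewrite (proj1 (count_occ_not_In Z.eq_dec w k) Hnot); simpl; unfold Rdiv; ring.
Qed.

Lemma ell_tail_mass_ge (R0 : nat) :
  / INR n * INR (S (Z.to_nat (Z.abs (nth (n - 1) w 0%Z))) - R0)
  <= symsum (fun k => tail_ind R0 (ZFin k) * ell w (ZFin k)) n.
Proof.
  destruct Hw as (Hlen & Hn & _).
  pose proof (walk_abs_le (n - 1) ltac:(lia)).
  apply symsum_tail_ge; [left; apply Rinv_0_lt_compat, lt_0_INR; lia | intros; apply ell_ge0 | | lia].
  intros j Hj.
  destruct (Z.le_gt_cases 0 (nth (n - 1) w 0%Z));
    [left | right]; apply ell_visited, (walk_visits (n - 1)); lia.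
Qed.

End Walk.

Theorem corollary2p4 (mu0 : Z -> R) (eps : R) (R0 : nat) :
  probZ mu0 -> 0 < eps -> (R_mu mu0 eps < R0)%nat ->
  forall (n : nat) (w : list Z),
    Omega0_ball n mu0 (eps / 2 ^ R0) w ->
    IZR (Z.abs (nth (n - 1) w 0%Z)) <= INR R0 + 2 * eps * INR n.
Proof.
  intros Hmu Heps HR n w [Hw [_ [c [Hc Hball]]]].
  pose proof (massI_gt mu0 eps R0 Hmu Heps ltac:(lia)) as Hmass.
  pose proof (Hball _ (BL1_tail_test R0)) as Htest.
  rewrite (integral_tail_test (ell w) mu0 R0 n) in Htest
    by (reflexivity || exact (ell_far n w Hw) || exact (proj2 Hmu)).
  pose proof (ell_tail_mass_ge n w Hw R0) as Hvisits.
  set (M := Z.to_nat (Z.abs (nth (n - 1) w 0%Z))) in Hvisits.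
  replace (IZR (Z.abs (nth (n - 1) w 0%Z))) with (INR M)
    by (rewrite INR_IZR_INZ; f_equal; unfold M; lia).
  assert (Hn : 0 < INR n) by (apply lt_0_INR; destruct Hw as (_ & ? & _); lia).
  assert (Htail_mass : symsum (fun k => tail_ind R0 (ZFin k) * ell w (ZFin k)) n
                       - (1 - massI mu0 R0) < eps).
  { apply (Rmult_lt_reg_l ((/2) ^ R0)); [apply pow_half_pos|].
    rewrite pow_inv in Htest |- *; unfold Rdiv in Hc; lra. }
  assert (Hexcess : INR (S M - R0) < 2 * eps * INR n).
  { replace (INR (S M - R0)) with (INR n * (/ INR n * INR (S M - R0))) by (field; lra).
    apply Rmult_lt_compat_l with (r := INR n) in Htail_mass; nra. }
  destruct (le_lt_dec R0 M) as [HRM|HMR].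
  - rewrite minus_INR, S_INR in Hexcess by exact (le_S _ _ HRM); lra.
  - assert (INR M <= INR R0) by (apply le_INR; lia); nra.
Qed.
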